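(* Let $(H,h)$ be an equivariant pair. Suppose $\{(H_n,h_n)\}$ is a sequence derived from $(H,h)$, and there are three distinct points $a,b,c \in S$ such that the sequences $\{h_n(a)\}$, $\{h_n(b)\}$, $\{h_n(c)\}$ converge to three distinct points of $S$. Then $\{(H_n,h_n)\}$ is tame, i.e. for every $p\in\mathbb{H}^3$ the sequence $\{H_n(p)\}$ is bounded in $\mathbb{H}^3$.
   Context: $\mathbb{H}^3$ is the upper half space model $\mathbb{C}\times(0,\infty)$ of hyperbolic $3$-space, with ideal boundary the Riemann sphere $S=\mathbb{C}\cup\{\infty\}$; $\mathcal{I}$ is the isometry group of $\mathbb{H}^3$, and each element of $\mathcal{I}$ extends to a conformal transformation of $S$ (every conformal transformation of $S$ arises this way), so $\mathcal{I}$ acts on $\mathbb{H}^3\cup S$. A nice lattice is a subgroup $\Gamma\subset\mathcal{I}$ acting freely, properly discontinuously and cocompactly on $\mathbb{H}^3$. A map $H:\mathbb{H}^3\to\mathbb{H}^3$ is $K$-bi-Lipschitz if it is a bijection with $K^{-1}d(x,y)\le d(H(x),H(y))\le Kd(x,y)$. An equivariant pair $(H,h)$ consists of a bi-Lipschitz map $H:\mathbb{H}^3\to\mathbb{H}^3$ and a homeomorphism $h:S\to S$ such that $H\cup h$ is continuous on $\mathbb{H}^3\cup S$ (i.e. $h$ is the continuous extension of $H$), together with nice lattices $\Gamma_1,\Gamma_2$ such that $H\Gamma_1H^{-1}=\Gamma_2$ and $h\Gamma_1h^{-1}=\Gamma_2$. A sequence $\{(H_n,h_n)\}$ is derived from $(H,h)$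 if for each $n$ there are $f_n,g_n\in\mathcal{I}$ with $H_n=f_nHg_n$ and $h_n=f_nhg_n$. *)

From Stdlib Require Import Reals List.
Open Scope R_scope.

Record H3 : Type := mkH3 { hx : R; hy : R; ht : R; ht_pos : 0 < ht }.

Definition arcosh (u : R) : R := ln (u + sqrt (u * u - 1)).

Definition dH (p q : H3) : R :=
  arcosh (1 + ((hx p - hx q)^2 + (hy p - hy q)^2 + (ht p - ht q)^2)
              / (2 * ht p * ht q)).

(* ---------- Riemann sphere S = C ∪ {∞}: None is ∞ ---------- *)
Definition S : Type := option (R * R).

(* ---------- Topology on H^3 ∪ S ----------
   H^3 ∪ S (closed upper half space plus ∞) is identified with the closed
   unit ball of R^3 via the standard Cayley-type map
   (x,y,t) |-> (2x, 2y, x^2+y^2+t^2-1) / (x^2+y^2+(t+1)^2),  ∞ |-> (0,0,1),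
   a homeomorphism; the topology of H^3 ∪ S is the induced Euclidean one. *)
Definition ballmap (x y t : R) : R * R * R :=
  let D := x^2 + y^2 + (t + 1)^2 in
  (2 * x / D, 2 * y / D, (x^2 + y^2 + t^2 - 1) / D).

Definition Hbar : Type := (H3 + S)%type.

Definition emb (z : Hbar) : R * R * R :=
  match z with
  | inl p => ballmap (hx p) (hy p) (ht p)
  | inr None => (0, 0, 1)
  | inr (Some (x, y)) => ballmap x y 0
  end.

Definition eucl (u v : R * R * R) : R :=
  let '(a1, a2, a3) := u in let '(b1, b2, b3) := v in
  sqrt ((a1 - b1)^2 + (a2 - b2)^2 + (a3 - b3)^2).

Definition dbar (z w : Hbar) : R := eucl (emb z) (emb w).

Definition dS (a b : S) : R := dbar (inr a) (inr b).

Definition continuous_bar (phi : Hbar -> Hbar) : Prop :=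
  forall z eps, 0 < eps -> exists delta, 0 < delta /\
    forall w, dbar z w < delta -> dbar (phi z) (phi w) < eps.

Definition continuous_S (f : S -> S) : Prop :=
  forall a eps, 0 < eps -> exists delta, 0 < delta /\
    forall b, dS a b < delta -> dS (f a) (f b) < eps.

Definition converges_S (u : nat -> S) (l : S) : Prop :=
  forall eps, 0 < eps -> exists N, forall n, (N <= n)%nat -> dS (u n) l < eps.

Definition union_map (F : H3 -> H3) (f : S -> S) (z : Hbar) : Hbar :=
  match z with inl p => inl (F p) | inr a => inr (f a) end.

Definition bijective {A B : Type} (f : A -> B) : Prop :=
  (forall x y, f x = f y -> x = y) /\ (forall y, exists x, f x = y).

(* ---------- the isometry group I ----------
   An element of I is represented by the pair (F, f) of the isometry F of
   H^3 and its (unique) continuous extension f to S. *)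
Definition Iso : Type := ((H3 -> H3) * (S -> S))%type.

Definition isIsom (g : Iso) : Prop :=
  bijective (fst g) /\
  (forall p q, dH (fst g p) (fst g q) = dH p q) /\
  continuous_bar (union_map (fst g) (snd g)).

Definition iso_comp (g1 g2 : Iso) : Iso :=
  (fun p => fst g1 (fst g2 p), fun a => snd g1 (snd g2 a)).

Definition iso_id : Iso := (fun p => p, fun a => a).

Definition compact_H (K : H3 -> Prop) : Prop :=
  forall u : nat -> H3, (forall n, K (u n)) ->
    exists (phi : nat -> nat) (p : H3),
      (forall n, (phi n < phi (Datatypes.S n))%nat) /\ K p /\
      (forall eps, 0 < eps -> exists N, forall n, (N <= n)%nat ->
         dH (u (phi n)) p < eps).

Definition subgroup_I (G : Iso -> Prop) : Prop :=
  (forall g, G g -> isIsom g) /\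
  G iso_id /\
  (forall g1 g2, G g1 -> G g2 -> G (iso_comp g1 g2)) /\
  (forall g, G g -> exists g', G g' /\ iso_comp g g' = iso_id
                                  /\ iso_comp g' g = iso_id).

Definition acts_freely (G : Iso -> Prop) : Prop :=
  forall g, G g -> (exists p, fst g p = p) -> fst g = (fun p => p).

Definition acts_properly_discontinuously (G : Iso -> Prop) : Prop :=
  forall K, compact_H K ->
    exists l : list Iso, forall g, G g ->
      (exists p, K p /\ K (fst g p)) -> In g l.

Definition acts_cocompactly (G : Iso -> Prop) : Prop :=
  exists K, compact_H K /\
    forall p, exists g q, G g /\ K q /\ fst g q = p.

Definition nice_lattice (G : Iso -> Prop) : Prop :=
  subgroup_I G /\ acts_freely G /\ acts_properly_discontinuously G /\
  acts_cocompactly G.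

Definition bi_lipschitz (H : H3 -> H3) : Prop :=
  bijective H /\ exists K, 0 < K /\
    forall p q, dH p q / K <= dH (H p) (H q) /\ dH (H p) (H q) <= K * dH p q.

Definition homeo_S (h : S -> S) : Prop :=
  continuous_S h /\ exists g : S -> S,
    (forall a, g (h a) = a) /\ (forall a, h (g a) = a) /\ continuous_S g.

Definition equivariant_pair (H : H3 -> H3) (h : S -> S) : Prop :=
  bi_lipschitz H /\ homeo_S h /\ continuous_bar (union_map H h) /\
  exists G1 G2 : Iso -> Prop, nice_lattice G1 /\ nice_lattice G2 /\
    (forall g1, G1 g1 -> exists g2, G2 g2 /\
        forall p, H (fst g1 p) = fst g2 (H p)) /\
    (forall g2, G2 g2 -> exists g1, G1 g1 /\
        forall p, H (fst g1 p) = fst g2 (H p)) /\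
    (forall g1, G1 g1 -> exists g2, G2 g2 /\
        forall a, h (snd g1 a) = snd g2 (h a)) /\
    (forall g2, G2 g2 -> exists g1, G1 g1 /\
        forall a, h (snd g1 a) = snd g2 (h a)).

Definition derived_from (Hn : nat -> H3 -> H3) (hn : nat -> S -> S)
    (H : H3 -> H3) (h : S -> S) : Prop :=
  forall n, exists f g : Iso, isIsom f /\ isIsom g /\
    (forall p, Hn n p = fst f (H (fst g p))) /\
    (forall a, hn n a = snd f (h (snd g a))).

Definition tame (Hn : nat -> H3 -> H3) : Prop :=
  forall p, exists q r, forall n, dH q (Hn n p) <= r.

(* Work in the ball model, where cosh dH(x, y) = 1 + 2|x - y|^2 / ((1 - |x|^2)(1 - |y|^2)).
   If an isometry g sends w to the centre, the invariance of this formula yields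
   |g x - g y|^2 = |x - y|^2 (1 - |w|^2)^2 / (Q(w, x) Q(w, y)), where Q = [mobius_den]
   satisfies 1/4 (1 - |w|^2)^2 <= Q <= 4. So g shrinks chordal distances by at most the factor (1 - |w|^2) / 4, and it squeezes
   points at distance >= e from w into a set of diameter <= 2 (1 - |w|^2) / e^2; by
   continuity both estimates hold on the sphere.
   Write H_n = f H g. Cocompactness of the first lattice and equivariance let us trade g
   for an isometry k with k p in a fixed compact set, at the price of composing f with an
   element of the second lattice. Then k^-1 (centre) is bounded, so k, and by compactness
   of the sphere also h o k, keeps a, b, c uniformly apart. As f sends these three points
   to points that are eventually uniformly apart, at most one of them is near
   f^-1 (centre), which is therefore bounded as well; hence H_n(p) = f (H (k p)) is bounded. *)

From Stdlib Require Import Reals Lra Lia Psatz ClassicalEpsilon Classical.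
Open Scope R_scope.

(** * Euclidean geometry of the closed unit ball *)

Definition vx (u : R * R * R) : R := fst (fst u).
Definition vy (u : R * R * R) : R := snd (fst u).
Definition vz (u : R * R * R) : R := snd u.
Definition sqnorm (u : R * R * R) : R := vx u ^ 2 + vy u ^ 2 + vz u ^ 2.
Definition sqdist (u v : R * R * R) : R :=
  (vx u - vx v) ^ 2 + (vy u - vy v) ^ 2 + (vz u - vz v) ^ 2.
Definition dot (u v : R * R * R) : R := vx u * vx v + vy u * vy v + vz u * vz v.

Lemma eucl_sqdist u v : eucl u v = sqrt (sqdist u v).
Proof. destruct u as [[u1 u2] u3], v as [[v1 v2] v3]. reflexivity. Qed.

Lemma sqnorm_ge0 u : 0 <= sqnorm u.
Proof.
  unfold sqnorm.
  pose proof (pow2_ge_0 (vx u)); pose proof (pow2_ge_0 (vy u)); pose proof (pow2_ge_0 (vz u)).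
  lra.
Qed.

Lemma sqdist_ge0 u v : 0 <= sqdist u v.
Proof.
  unfold sqdist.
  pose proof (pow2_ge_0 (vx u - vx v)); pose proof (pow2_ge_0 (vy u - vy v)).
  pose proof (pow2_ge_0 (vz u - vz v)). lra.
Qed.

Lemma sqdist_sym u v : sqdist u v = sqdist v u.
Proof. unfold sqdist. ring. Qed.

Lemma sqdist_le4 u v : sqnorm u <= 1 -> sqnorm v <= 1 -> sqdist u v <= 4.
Proof.
  unfold sqdist, sqnorm. intros.
  pose proof (pow2_ge_0 (vx u + vx v)); pose proof (pow2_ge_0 (vy u + vy v)).
  pose proof (pow2_ge_0 (vz u + vz v)). nra.
Qed.

Lemma eucl_sym u v : eucl u v = eucl v u.
Proof. rewrite !eucl_sqdist, sqdist_sym. reflexivity. Qed.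

Lemma eucl_ge0 u v : 0 <= eucl u v.
Proof. rewrite eucl_sqdist. apply sqrt_pos. Qed.

Lemma eucl_refl u : eucl u u = 0.
Proof. rewrite eucl_sqdist. unfold sqdist. rewrite <- sqrt_0. f_equal. ring. Qed.

Lemma pow2_eq0 x : x ^ 2 = 0 -> x = 0.
Proof. intro H. destruct (Req_dec x 0) as [|Hx]; [assumption|]. now destruct (pow_nonzero x 2 Hx). Qed.

Lemma eucl_eq0 u v : eucl u v = 0 -> u = v.
Proof.
  rewrite eucl_sqdist. intro H. apply sqrt_eq_0 in H; [|apply sqdist_ge0].
  destruct u as [[u1 u2] u3], v as [[v1 v2] v3]. unfold sqdist, vx, vy, vz in H; simpl in H.
  pose proof (pow2_ge_0 (u1 - v1)); pose proof (pow2_ge_0 (u2 - v2)); pose proof (pow2_ge_0 (u3 - v3)).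
  assert (E1 : u1 - v1 = 0) by (apply pow2_eq0; lra).
  assert (E2 : u2 - v2 = 0) by (apply pow2_eq0; lra).
  assert (E3 : u3 - v3 = 0) by (apply pow2_eq0; lra).
  f_equal; [f_equal|]; lra.
Qed.

Lemma cauchy_schwarz u v : dot u v * dot u v <= sqnorm u * sqnorm v.
Proof.
  unfold dot, sqnorm.
  pose proof (pow2_ge_0 (vx u * vy v - vy u * vx v)).
  pose proof (pow2_ge_0 (vx u * vz v - vz u * vx v)).
  pose proof (pow2_ge_0 (vy u * vz v - vz u * vy v)). nra.
Qed.

Lemma eucl_triangle u v w : eucl u w <= eucl u v + eucl v w.
Proof.
  set (a := (vx u - vx v, vy u - vy v, vz u - vz v)).
  set (b := (vx v - vx w, vy v - vy w, vz v - vz w)).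
  assert (Ea : sqdist u v = sqnorm a) by reflexivity.
  assert (Eb : sqdist v w = sqnorm b) by reflexivity.
  assert (Eab : sqdist u w = sqnorm a + 2 * dot a b + sqnorm b)
    by (unfold sqdist, sqnorm, dot, a, b, vx, vy, vz; simpl; ring).
  rewrite !eucl_sqdist, Ea, Eb, Eab.
  pose proof (sqnorm_ge0 a); pose proof (sqnorm_ge0 b).
  pose proof (sqrt_pos (sqnorm a)); pose proof (sqrt_pos (sqnorm b)).
  assert (Hd : dot a b <= sqrt (sqnorm a) * sqrt (sqnorm b)).
  { rewrite <- sqrt_mult by assumption.
    destruct (Rle_or_lt (dot a b) 0); [pose proof (sqrt_pos (sqnorm a * sqnorm b)); lra|].
    rewrite <- (sqrt_square (dot a b)) by lra.
    apply sqrt_le_1_alt, cauchy_schwarz. }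
  rewrite <- (sqrt_square (sqrt (sqnorm a) + sqrt (sqnorm b))) by lra.
  apply sqrt_le_1_alt.
  replace ((sqrt (sqnorm a) + sqrt (sqnorm b)) * (sqrt (sqnorm a) + sqrt (sqnorm b)))
    with (sqrt (sqnorm a) * sqrt (sqnorm a) + sqrt (sqnorm b) * sqrt (sqnorm b)
          + 2 * (sqrt (sqnorm a) * sqrt (sqnorm b))) by ring.
  rewrite !sqrt_sqrt by assumption. lra.
Qed.

Lemma eucl_lt_of_coords u v e :
  Rabs (vx u - vx v) < e -> Rabs (vy u - vy v) < e -> Rabs (vz u - vz v) < e ->
  eucl u v < 2 * e.
Proof.
  intros H1 H2 H3. rewrite eucl_sqdist.
  assert (Hsq : forall r, Rabs r < e -> r ^ 2 < e ^ 2).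
  { intros r Hr. rewrite <- !Rsqr_pow2. apply Rsqr_lt_abs_1.
    rewrite (Rabs_right e) by (pose proof (Rabs_pos r); lra). exact Hr. }
  pose proof (Rabs_pos (vx u - vx v)).
  rewrite <- (sqrt_pow2 (2 * e)) by lra. apply sqrt_lt_1_alt.
  split; [apply sqdist_ge0|].
  pose proof (Hsq _ H1); pose proof (Hsq _ H2); pose proof (Hsq _ H3).
  unfold sqdist. nra.
Qed.

Lemma dbar_sym z w : dbar z w = dbar w z.
Proof. apply eucl_sym. Qed.

Lemma dbar_triangle z y w : dbar z w <= dbar z y + dbar y w.
Proof. apply eucl_triangle. Qed.

Lemma dS_sym a b : dS a b = dS b a.
Proof. apply dbar_sym. Qed.

Lemma dS_triangle a b c : dS a c <= dS a b + dS b c.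
Proof. apply dbar_triangle. Qed.

Lemma dS_ge0 a b : 0 <= dS a b.
Proof. apply eucl_ge0. Qed.

Lemma dS_refl a : dS a a = 0.
Proof. apply eucl_refl. Qed.

(** * The boundary sphere *)

(* Inverse of [ballmap] off the north pole (0,0,1) of the sphere. *)
Definition ball_inv (U : R * R * R) : R * R * R :=
  let N := vx U ^ 2 + vy U ^ 2 + (1 - vz U) ^ 2 in
  (2 * vx U / N, 2 * vy U / N, (1 - sqnorm U) / N).

Lemma ball_inv_ballmap x y t : 0 <= t -> ball_inv (ballmap x y t) = (x, y, t).
Proof.
  intro Ht.
  assert (HD : 0 < x ^ 2 + y ^ 2 + (t + 1) ^ 2)
    by (pose proof (pow2_ge_0 x); pose proof (pow2_ge_0 y); nra).
  unfold ball_inv, ballmap, sqnorm, vx, vy, vz; cbn [fst snd].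
  set (D := x ^ 2 + y ^ 2 + (t + 1) ^ 2) in *.
  assert (HN : (2 * x / D) ^ 2 + (2 * y / D) ^ 2 + (1 - (x ^ 2 + y ^ 2 + t ^ 2 - 1) / D) ^ 2
               = 4 / D) by (unfold D in *; field; lra).
  rewrite HN. f_equal; [f_equal|]; unfold D in *; field; lra.
Qed.

Lemma ballmap_ball_inv U : vx U ^ 2 + vy U ^ 2 + (1 - vz U) ^ 2 <> 0 ->
  ballmap (vx (ball_inv U)) (vy (ball_inv U)) (vz (ball_inv U)) = U.
Proof.
  destruct U as [[u1 u2] u3]. unfold ball_inv, ballmap, sqnorm, vx, vy, vz; cbn [fst snd]. intro HN.
  set (N := u1 ^ 2 + u2 ^ 2 + (1 - u3) ^ 2) in *.
  assert (HD : (2 * u1 / N) ^ 2 + (2 * u2 / N) ^ 2 + ((1 - (u1 ^ 2 + u2 ^ 2 + u3 ^ 2)) / N + 1) ^ 2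
               = 4 / N) by (unfold N in *; field; assumption).
  rewrite HD. f_equal; [f_equal|]; unfold N in *; field; assumption.
Qed.

Lemma sqnorm_emb_S a : sqnorm (emb (inr a)) = 1.
Proof.
  destruct a as [[x y]|]; unfold sqnorm, emb, ballmap, vx, vy, vz; cbn [fst snd]; [|ring].
  assert (0 < x ^ 2 + y ^ 2 + (0 + 1) ^ 2)
    by (pose proof (pow2_ge_0 x); pose proof (pow2_ge_0 y); nra).
  field. lra.
Qed.

Lemma emb_S_inj a b : emb (inr a) = emb (inr b) -> a = b.
Proof.
  assert (Hpole : forall x y, emb (inr (Some (x, y))) <> emb (inr None)).
  { intros x y E. cbn [emb fst snd] in E. unfold ballmap in E. injection E as _ _ E.
    assert (0 < x ^ 2 + y ^ 2 + (0 + 1) ^ 2)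
      by (pose proof (pow2_ge_0 x); pose proof (pow2_ge_0 y); nra).
    apply (Rmult_eq_compat_r (x ^ 2 + y ^ 2 + (0 + 1) ^ 2)) in E.
    unfold Rdiv in E. rewrite Rmult_assoc, Rinv_l in E by lra. nra. }
  intro E. destruct a as [[x y]|], b as [[x' y']|]; try reflexivity.
  - apply (f_equal ball_inv) in E. cbn [emb fst snd] in E.
    rewrite !ball_inv_ballmap in E by lra. now injection E as -> ->.
  - now destruct (Hpole x y).
  - symmetry in E. now destruct (Hpole x' y').
Qed.

Lemma dS_eq0 a b : dS a b = 0 -> a = b.
Proof. intro H. apply emb_S_inj, eucl_eq0, H. Qed.

Lemma dS_pos a b : a <> b -> 0 < dS a b.
Proof.
  intro Hab. destruct (Rle_lt_or_eq_dec 0 (dS a b) (dS_ge0 a b)) as [|E]; [assumption|].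
  now destruct (Hab (dS_eq0 a b (eq_sym E))).
Qed.

Lemma sphere_emb_S L : sqnorm L = 1 -> exists a, emb (inr a) = L.
Proof.
  destruct L as [[l1 l2] l3]. unfold sqnorm, vx, vy, vz; cbn [fst snd]. intro HL.
  pose proof (pow2_ge_0 l1); pose proof (pow2_ge_0 l2).
  destruct (Req_dec l3 1) as [->|Hl3].
  - exists None. simpl.
    assert (l1 = 0) by (apply pow2_eq0; nra). assert (l2 = 0) by (apply pow2_eq0; nra).
    now subst.
  - assert (HN : l1 ^ 2 + l2 ^ 2 + (1 - l3) ^ 2 <> 0)
      by (assert (0 < (1 - l3) ^ 2) by (apply pow_lt; nra); lra).
    pose proof (ballmap_ball_inv (l1, l2, l3) HN) as E.
    unfold ball_inv, sqnorm, vx, vy, vz in E; cbn [emb fst snd] in E.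
    exists (Some (2 * l1 / (l1 ^ 2 + l2 ^ 2 + (1 - l3) ^ 2),
                  2 * l2 / (l1 ^ 2 + l2 ^ 2 + (1 - l3) ^ 2))).
    rewrite HL in E. replace ((1 - 1) / (l1 ^ 2 + l2 ^ 2 + (1 - l3) ^ 2)) with 0 in E
      by (field; assumption).
    exact E.
Qed.

Lemma exists_H3_near a eps : 0 < eps -> exists x : H3, dbar (inr a) (inl x) < eps.
Proof.
  intro He. pose proof (sqnorm_emb_S a) as HA.
  set (l := Rmin (eps / 2) (1 / 2)).
  assert (Hl : 0 < l <= 1 / 2 /\ l < eps) by (unfold l, Rmin; destruct Rle_dec; lra).
  set (A := emb (inr a)) in *.
  set (U := ((1 - l) * vx A, (1 - l) * vy A, (1 - l) * vz A)).
  assert (HU : sqnorm U = (1 - l) ^ 2 * sqnorm A)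
    by (unfold U, sqnorm, vx, vy, vz; cbn [fst snd]; ring).
  rewrite HA, Rmult_1_r in HU.
  assert (Hz : vz U < 1).
  { destruct (Rlt_le_dec (vz U) 1) as [|Hz]; [assumption|].
    unfold sqnorm in HU. pose proof (pow2_ge_0 (vx U)); pose proof (pow2_ge_0 (vy U)). nra. }
  assert (HN : 0 < vx U ^ 2 + vy U ^ 2 + (1 - vz U) ^ 2)
    by (pose proof (pow2_ge_0 (vx U)); pose proof (pow2_ge_0 (vy U)); nra).
  assert (Ht : 0 < vz (ball_inv U))
    by (unfold ball_inv, vz at 1; cbn [fst snd]; apply Rdiv_lt_0_compat; nra).
  exists (mkH3 (vx (ball_inv U)) (vy (ball_inv U)) _ Ht).
  unfold dbar. fold A. cbn [emb hx hy ht]. rewrite ballmap_ball_inv by lra.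
  rewrite eucl_sqdist.
  replace (sqdist A U) with (l ^ 2 * sqnorm A)
    by (unfold U, sqdist, sqnorm, vx, vy, vz; cbn [fst snd]; ring).
  rewrite HA, Rmult_1_r.
  rewrite sqrt_pow2; lra.
Qed.

(** * The ball model of H^3 *)

Definition ball_pt (p : H3) : R * R * R := emb (inl p).

Definition ball_gap (p : H3) : R := 1 - sqnorm (ball_pt p).

Definition cosh_dH (p q : H3) : R :=
  1 + ((hx p - hx q) ^ 2 + (hy p - hy q) ^ 2 + (ht p - ht q) ^ 2) / (2 * ht p * ht q).

(* [|W|^2 |W' - X|^2] for the inversion [W'] of [W] in the unit sphere: the
   denominator of the conformal factor of a ball automorphism sending [W] to 0. *)
Definition mobius_den (W X : R * R * R) : R :=
  (1 - sqnorm W) * (1 - sqnorm X) + sqdist W X.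

Definition origin : H3 := mkH3 0 0 1 Rlt_0_1.

Lemma dH_arcosh p q : dH p q = arcosh (cosh_dH p q).
Proof. reflexivity. Qed.

Lemma ball_denom_pos p : 0 < hx p ^ 2 + hy p ^ 2 + (ht p + 1) ^ 2.
Proof. pose proof (ht_pos p); pose proof (pow2_ge_0 (hx p)); pose proof (pow2_ge_0 (hy p)). nra. Qed.

Lemma ball_gap_eq p : ball_gap p = 4 * ht p / (hx p ^ 2 + hy p ^ 2 + (ht p + 1) ^ 2).
Proof.
  pose proof (ball_denom_pos p).
  unfold ball_gap, ball_pt, sqnorm, emb, ballmap, vx, vy, vz; cbn [fst snd]. field. lra.
Qed.

Lemma ball_gap_pos p : 0 < ball_gap p.
Proof.
  rewrite ball_gap_eq. pose proof (ball_denom_pos p); pose proof (ht_pos p).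
  apply Rdiv_lt_0_compat; lra.
Qed.

Lemma ball_gap_le1 p : ball_gap p <= 1.
Proof. pose proof (sqnorm_ge0 (ball_pt p)). unfold ball_gap. lra. Qed.

Lemma sqnorm_ball_pt_le1 p : sqnorm (ball_pt p) <= 1.
Proof. pose proof (ball_gap_pos p). unfold ball_gap in *. lra. Qed.

Lemma cosh_dH_ball p q :
  cosh_dH p q = 1 + 2 * sqdist (ball_pt p) (ball_pt q) / (ball_gap p * ball_gap q).
Proof.
  rewrite !ball_gap_eq.
  pose proof (ball_denom_pos p); pose proof (ball_denom_pos q).
  pose proof (ht_pos p); pose proof (ht_pos q).
  unfold cosh_dH, sqdist, ball_pt, emb, ballmap, vx, vy, vz; cbn [fst snd].
  field. repeat split; lra.
Qed.

Lemma cosh_dH_sym p q : cosh_dH p q = cosh_dH q p.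
Proof. rewrite !cosh_dH_ball, sqdist_sym, (Rmult_comm (ball_gap p)). reflexivity. Qed.

Lemma cosh_dH_ge1 p q : 1 <= cosh_dH p q.
Proof.
  rewrite cosh_dH_ball.
  pose proof (sqdist_ge0 (ball_pt p) (ball_pt q)); pose proof (ball_gap_pos p); pose proof (ball_gap_pos q).
  assert (0 <= 2 * sqdist (ball_pt p) (ball_pt q) / (ball_gap p * ball_gap q))
    by (apply Rmult_le_pos; [lra|]; apply Rlt_le, Rinv_0_lt_compat; nra).
  lra.
Qed.

Lemma cosh_dH_add1 p q :
  cosh_dH p q + 1 = 2 * mobius_den (ball_pt p) (ball_pt q) / (ball_gap p * ball_gap q).
Proof.
  rewrite cosh_dH_ball. unfold mobius_den. fold (ball_gap p) (ball_gap q).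
  pose proof (ball_gap_pos p); pose proof (ball_gap_pos q). field. lra.
Qed.

Lemma ball_pt_origin : ball_pt origin = (0, 0, 0).
Proof. unfold ball_pt, emb, ballmap; cbn. f_equal; [f_equal|]; field. Qed.

Lemma ball_gap_origin : ball_gap origin = 1.
Proof. unfold ball_gap. rewrite ball_pt_origin. unfold sqnorm, vx, vy, vz; cbn [fst snd]. ring. Qed.

Lemma cosh_dH_origin x : cosh_dH origin x + 1 = 2 / ball_gap x.
Proof.
  assert (HQ : mobius_den (ball_pt origin) (ball_pt x) = 1).
  { unfold mobius_den. rewrite ball_pt_origin.
    unfold sqnorm, sqdist, vx, vy, vz; cbn [fst snd]. ring. }
  rewrite cosh_dH_add1, ball_gap_origin, HQ. pose proof (ball_gap_pos x). field. lra.
Qed.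

Lemma mobius_den_bounds W X : sqnorm W <= 1 -> sqnorm X <= 1 ->
  (1 - sqnorm W) ^ 2 / 4 <= mobius_den W X <= 4.
Proof.
  intros HW HX.
  assert (E : mobius_den W X = 1 - 2 * dot W X + sqnorm W * sqnorm X)
    by (unfold mobius_den, dot, sqnorm, sqdist; ring).
  rewrite E. pose proof (cauchy_schwarz W X) as CS.
  assert (Hsum : -2 * dot W X <= sqnorm W + sqnorm X).
  { unfold dot, sqnorm.
    pose proof (pow2_ge_0 (vx W + vx X)); pose proof (pow2_ge_0 (vy W + vy X)).
    pose proof (pow2_ge_0 (vz W + vz X)). nra. }
  pose proof (sqnorm_ge0 W); pose proof (sqnorm_ge0 X).
  set (a := sqnorm W) in *. set (b := sqnorm X) in *. set (d := dot W X) in *.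
  split; [|nra].
  (* [1 - 2d + ab >= (1 - d)^2] and [1 - d >= (1 - a) / 2] *)
  assert (H2 : (1 - a) / 2 <= 1 - d).
  { destruct (Rle_or_lt d ((1 + a) / 2)) as [|Hd]; [lra|].
    assert ((1 + a) / 2 * ((1 + a) / 2) < d * d) by nra.
    pose proof (pow2_ge_0 (1 - a)). nra. }
  assert (((1 - a) / 2) ^ 2 <= (1 - d) ^ 2) by (apply pow_incr; lra).
  nra.
Qed.

Lemma mobius_den_ge_sqdist W X : sqnorm W <= 1 -> sqnorm X <= 1 -> sqdist W X <= mobius_den W X.
Proof. intros. unfold mobius_den. nra. Qed.

Lemma mobius_den_ball_pt_pos w x : 0 < mobius_den (ball_pt w) (ball_pt x).
Proof.
  destruct (mobius_den_bounds (ball_pt w) (ball_pt x)) as [H _]; try apply sqnorm_ball_pt_le1.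
  fold (ball_gap w) in H. pose proof (ball_gap_pos w). nra.
Qed.

(* Weak triangle inequalities through the origin, in the form
   [cosh (s + t) + 1 <= 2 (cosh s + 1) (cosh t + 1)]. *)
Lemma cosh_dH_add1_le x y :
  cosh_dH x y + 1 <= 2 * (cosh_dH origin x + 1) * (cosh_dH origin y + 1).
Proof.
  rewrite cosh_dH_add1, !cosh_dH_origin.
  pose proof (ball_gap_pos x); pose proof (ball_gap_pos y).
  destruct (mobius_den_bounds (ball_pt x) (ball_pt y)) as [_ HQ]; try apply sqnorm_ball_pt_le1.
  replace (2 * (2 / ball_gap x) * (2 / ball_gap y)) with (2 * 4 / (ball_gap x * ball_gap y))
    by (field; lra).
  unfold Rdiv. apply Rmult_le_compat_r; [apply Rlt_le, Rinv_0_lt_compat; nra | lra].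
Qed.

Lemma cosh_dH_origin_add1_le x y :
  cosh_dH origin y + 1 <= 2 * (cosh_dH origin x + 1) * (cosh_dH x y + 1).
Proof.
  rewrite (cosh_dH_add1 x y), !cosh_dH_origin.
  pose proof (ball_gap_pos x); pose proof (ball_gap_pos y).
  destruct (mobius_den_bounds (ball_pt x) (ball_pt y)) as [HQ _]; try apply sqnorm_ball_pt_le1.
  fold (ball_gap x) in HQ.
  apply (Rmult_le_reg_r (ball_gap x * ball_gap x * ball_gap y)); [repeat apply Rmult_lt_0_compat; lra|].
  replace (2 / ball_gap y * (ball_gap x * ball_gap x * ball_gap y)) with (2 * ball_gap x ^ 2)
    by (field; lra).
  replace (2 * (2 / ball_gap x) * (2 * mobius_den (ball_pt x) (ball_pt y) / (ball_gap x * ball_gap y))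
           * (ball_gap x * ball_gap x * ball_gap y))
    with (8 * mobius_den (ball_pt x) (ball_pt y)) by (field; lra).
  lra.
Qed.

Lemma arcosh_arg_le u v : 1 <= u <= v ->
  1 <= u + sqrt (u * u - 1) <= v + sqrt (v * v - 1).
Proof.
  intros [H1 H2]. pose proof (sqrt_pos (u * u - 1)).
  assert (sqrt (u * u - 1) <= sqrt (v * v - 1)) by (apply sqrt_le_1_alt; nra).
  lra.
Qed.

Lemma arcosh_le u v : 1 <= u <= v -> arcosh u <= arcosh v.
Proof.
  intro H. destruct (arcosh_arg_le u v H). unfold arcosh.
  destruct (Req_dec (u + sqrt (u * u - 1)) (v + sqrt (v * v - 1))) as [E|]; [rewrite E; lra|].
  apply Rlt_le, ln_increasing; lra.
Qed.

Lemma arcosh_lt u v : 1 <= u -> u < v -> arcosh u < arcosh v.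
Proof.
  intros H1 H2. destruct (arcosh_arg_le u v) as [A B]; [lra|].
  assert (sqrt (u * u - 1) <= sqrt (v * v - 1)) by (apply sqrt_le_1_alt; nra).
  unfold arcosh. apply ln_increasing; lra.
Qed.

Lemma arcosh_inj u v : 1 <= u -> 1 <= v -> arcosh u = arcosh v -> u = v.
Proof.
  intros Hu Hv E. destruct (Rtotal_order u v) as [Hlt|[|Hlt]]; [|assumption|].
  - pose proof (arcosh_lt u v Hu Hlt). lra.
  - pose proof (arcosh_lt v u Hv Hlt). lra.
Qed.

Lemma cosh_dH_le_of_dH_le p q r : dH p q <= r -> cosh_dH p q <= exp r.
Proof.
  rewrite dH_arcosh. intro Hr. pose proof (cosh_dH_ge1 p q) as H1.
  destruct (arcosh_arg_le (cosh_dH p q) (cosh_dH p q)) as [A _]; [lra|].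
  pose proof (sqrt_pos (cosh_dH p q * cosh_dH p q - 1)).
  assert (E : exp (arcosh (cosh_dH p q)) = cosh_dH p q + sqrt (cosh_dH p q * cosh_dH p q - 1))
    by (apply exp_ln; lra).
  destruct (Req_dec (arcosh (cosh_dH p q)) r) as [<-|]; [lra|].
  pose proof (exp_increasing (arcosh (cosh_dH p q)) r ltac:(lra)). lra.
Qed.

Lemma dH_le_of_cosh_dH_le p q M : cosh_dH p q <= M -> dH p q <= arcosh M.
Proof. intro. rewrite dH_arcosh. apply arcosh_le. pose proof (cosh_dH_ge1 p q). lra. Qed.

Lemma isIsom_cosh_dH g p q : isIsom g -> cosh_dH (fst g p) (fst g q) = cosh_dH p q.
Proof.
  intros [_ [Hd _]]. specialize (Hd p q). rewrite !dH_arcosh in Hd.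
  apply arcosh_inj; auto using cosh_dH_ge1.
Qed.

(** * Isometries moving a point to the centre *)

Lemma union_map_near_boundary (F : H3 -> H3) f a eps :
  continuous_bar (union_map F f) -> 0 < eps ->
  exists x, dbar (inr a) (inl x) < eps /\ dbar (inr (f a)) (inl (F x)) < eps.
Proof.
  intros Hc He. destruct (Hc (inr a) eps He) as [d [Hd Hw]].
  destruct (exists_H3_near a (Rmin d eps)) as [x Hx]; [apply Rmin_pos; lra|].
  pose proof (Rmin_l d eps); pose proof (Rmin_r d eps).
  exists x. split; [lra|]. apply (Hw (inl x)). lra.
Qed.

Definition separated3 (d : R) (a b c : S) : Prop :=
  d <= dS a b /\ d <= dS a c /\ d <= dS b c.

Section MovingToOrigin.

Variables (g : Iso) (w : H3).
Hypotheses (Hg : isIsom g) (Hw : fst g w = origin).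

Lemma ball_gap_image x :
  ball_gap (fst g x) = ball_gap w * ball_gap x / mobius_den (ball_pt w) (ball_pt x).
Proof.
  pose proof (cosh_dH_origin (fst g x)) as E.
  rewrite <- Hw, isIsom_cosh_dH, cosh_dH_add1 in E by exact Hg.
  pose proof (ball_gap_pos (fst g x)); pose proof (ball_gap_pos w); pose proof (ball_gap_pos x).
  pose proof (mobius_den_ball_pt_pos w x).
  apply (Rmult_eq_reg_r (2 / ball_gap (fst g x) * mobius_den (ball_pt w) (ball_pt x)));
    [|apply Rgt_not_eq, Rmult_lt_0_compat; [apply Rdiv_lt_0_compat|]; lra].
  rewrite <- E at 2. field. repeat split; lra.
Qed.

Lemma sqdist_image x y :
  sqdist (ball_pt (fst g x)) (ball_pt (fst g y)) =
  sqdist (ball_pt x) (ball_pt y) * (ball_gap w * ball_gap w)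
    / (mobius_den (ball_pt w) (ball_pt x) * mobius_den (ball_pt w) (ball_pt y)).
Proof.
  pose proof (cosh_dH_ball (fst g x) (fst g y)) as E.
  rewrite isIsom_cosh_dH, cosh_dH_ball, !ball_gap_image in E by exact Hg.
  pose proof (ball_gap_pos w); pose proof (ball_gap_pos x); pose proof (ball_gap_pos y).
  pose proof (mobius_den_ball_pt_pos w x); pose proof (mobius_den_ball_pt_pos w y).
  set (A := sqdist (ball_pt x) (ball_pt y)) in *.
  set (B := sqdist (ball_pt (fst g x)) (ball_pt (fst g y))) in *.
  set (Qx := mobius_den (ball_pt w) (ball_pt x)) in *.
  set (Qy := mobius_den (ball_pt w) (ball_pt y)) in *.
  assert (E' : A / (ball_gap x * ball_gap y)
               = B / (ball_gap w * ball_gap x / Qx * (ball_gap w * ball_gap y / Qy))) by lra.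
  replace B with (A / (ball_gap x * ball_gap y)
                   * (ball_gap w * ball_gap x / Qx * (ball_gap w * ball_gap y / Qy)))
    by (rewrite E'; field; repeat split; lra).
  field. repeat split; lra.
Qed.

Lemma dbar_image_ge k x y : 0 < k -> k <= ball_gap w ->
  k / 4 * dbar (inl x) (inl y) <= dbar (inl (fst g x)) (inl (fst g y)).
Proof.
  intros Hk Hkw. unfold dbar. rewrite !eucl_sqdist. fold (ball_pt x) (ball_pt y).
  fold (ball_pt (fst g x)) (ball_pt (fst g y)). rewrite sqdist_image.
  pose proof (mobius_den_ball_pt_pos w x); pose proof (mobius_den_ball_pt_pos w y).
  destruct (mobius_den_bounds (ball_pt w) (ball_pt x)) as [_ Qx]; try apply sqnorm_ball_pt_le1.
  destruct (mobius_den_bounds (ball_pt w) (ball_pt y)) as [_ Qy]; try apply sqnorm_ball_pt_le1.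
  pose proof (sqdist_ge0 (ball_pt x) (ball_pt y)).
  rewrite <- (sqrt_pow2 (k / 4)) by lra. rewrite <- sqrt_mult by (try apply pow2_ge_0; lra).
  apply sqrt_le_1_alt.
  set (A := sqdist (ball_pt x) (ball_pt y)) in *.
  unfold Rdiv. rewrite Rinv_mult.
  assert (/ 4 <= / mobius_den (ball_pt w) (ball_pt x)) by (apply Rinv_le_contravar; lra).
  assert (/ 4 <= / mobius_den (ball_pt w) (ball_pt y)) by (apply Rinv_le_contravar; lra).
  assert (k * k <= ball_gap w * ball_gap w) by nra.
  replace ((k * / 4) ^ 2 * A) with (A * (k * k) * (/ 4 * / 4)) by ring.
  apply Rmult_le_compat; try nra.
Qed.

Lemma dbar_image_le e x y : 0 < e ->
  e * e <= sqdist (ball_pt w) (ball_pt x) -> e * e <= sqdist (ball_pt w) (ball_pt y) ->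
  dbar (inl (fst g x)) (inl (fst g y)) <= 2 * ball_gap w / (e * e).
Proof.
  intros He Hx Hy. unfold dbar. rewrite !eucl_sqdist.
  fold (ball_pt (fst g x)) (ball_pt (fst g y)). rewrite sqdist_image.
  pose proof (mobius_den_ball_pt_pos w x); pose proof (mobius_den_ball_pt_pos w y).
  pose proof (ball_gap_pos w).
  pose proof (mobius_den_ge_sqdist (ball_pt w) (ball_pt x)
                (sqnorm_ball_pt_le1 w) (sqnorm_ball_pt_le1 x)).
  pose proof (mobius_den_ge_sqdist (ball_pt w) (ball_pt y)
                (sqnorm_ball_pt_le1 w) (sqnorm_ball_pt_le1 y)).
  pose proof (sqdist_le4 (ball_pt x) (ball_pt y) (sqnorm_ball_pt_le1 x) (sqnorm_ball_pt_le1 y)).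
  pose proof (sqdist_ge0 (ball_pt x) (ball_pt y)).
  assert (0 < e * e) by nra.
  rewrite <- (sqrt_pow2 (2 * ball_gap w / (e * e)))
    by (apply Rlt_le, Rdiv_lt_0_compat; lra).
  apply sqrt_le_1_alt.
  set (A := sqdist (ball_pt x) (ball_pt y)) in *.
  set (Qx := mobius_den (ball_pt w) (ball_pt x)) in *.
  set (Qy := mobius_den (ball_pt w) (ball_pt y)) in *.
  set (P := ball_gap w) in *. set (E := e * e) in *.
  replace ((2 * P / E) ^ 2) with (4 * (P * P) / (E * E)) by (field; lra).
  apply (Rmult_le_reg_r (Qx * Qy * (E * E))); [repeat apply Rmult_lt_0_compat; lra|].
  replace (A * (P * P) / (Qx * Qy) * (Qx * Qy * (E * E))) with (A * (P * P) * (E * E))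
    by (field; lra).
  replace (4 * (P * P) / (E * E) * (Qx * Qy * (E * E))) with (4 * (P * P) * (Qx * Qy))
    by (field; lra).
  assert (E * E <= Qx * Qy) by nra.
  apply Rmult_le_compat; nra.
Qed.

Lemma dS_image_ge k a b : 0 < k -> k <= ball_gap w -> k / 4 * dS a b <= dS (snd g a) (snd g b).
Proof.
  intros Hk Hkw. pose proof Hg as [_ [_ Hc]]. pose proof (ball_gap_le1 w).
  apply Rle_plus_epsilon. intros e He.
  destruct (union_map_near_boundary (fst g) (snd g) a (e / 4) Hc) as [x [Hx1 Hx2]]; [lra|].
  destruct (union_map_near_boundary (fst g) (snd g) b (e / 4) Hc) as [y [Hy1 Hy2]]; [lra|].
  pose proof (dbar_image_ge k x y Hk Hkw).
  assert (Hab : dS a b <= dbar (inr a) (inl x) + dbar (inl x) (inl y) + dbar (inl y) (inr b)).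
  { pose proof (dbar_triangle (inr a) (inl x) (inr b)).
    pose proof (dbar_triangle (inl x) (inl y) (inr b)). unfold dS. lra. }
  assert (Hxy : dbar (inl (fst g x)) (inl (fst g y)) <=
     dbar (inl (fst g x)) (inr (snd g a)) + dS (snd g a) (snd g b)
     + dbar (inr (snd g b)) (inl (fst g y))).
  { pose proof (dbar_triangle (inl (fst g x)) (inr (snd g a)) (inl (fst g y))).
    pose proof (dbar_triangle (inr (snd g a)) (inr (snd g b)) (inl (fst g y))). unfold dS. lra. }
  rewrite (dbar_sym (inl (fst g x)) (inr (snd g a))) in Hxy.
  rewrite (dbar_sym (inl y) (inr b)) in Hab.
  assert (Hk4 : k / 4 * dS a b <= k / 4 * (dbar (inl x) (inl y) + e / 2))
    by (apply Rmult_le_compat_l; lra).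
  rewrite Rmult_plus_distr_l in Hk4.
  assert (k / 4 * (e / 2) <= e / 2) by nra.
  lra.
Qed.

Lemma dS_image_le eta a b : 0 < eta ->
  eta <= eucl (ball_pt w) (emb (inr a)) -> eta <= eucl (ball_pt w) (emb (inr b)) ->
  dS (snd g a) (snd g b) <= 8 * ball_gap w / (eta * eta).
Proof.
  intros He Ha Hb. pose proof Hg as [_ [_ Hc]].
  apply Rle_plus_epsilon. intros e He'.
  set (eps := Rmin (e / 2) (eta / 2)).
  assert (Heps : 0 < eps <= e / 2 /\ eps <= eta / 2)
    by (unfold eps; repeat split; [apply Rmin_pos; lra | apply Rmin_l | apply Rmin_r]).
  destruct (union_map_near_boundary (fst g) (snd g) a (eps / 2) Hc) as [x [Hx1 Hx2]]; [lra|].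
  destruct (union_map_near_boundary (fst g) (snd g) b (eps / 2) Hc) as [y [Hy1 Hy2]]; [lra|].
  assert (Far : forall z c, eta <= eucl (ball_pt w) (emb (inr c)) ->
            dbar (inr c) (inl z) < eps / 2 -> eta / 2 * (eta / 2) <= sqdist (ball_pt w) (ball_pt z)).
  { intros z c Hc' Hz. unfold dbar in Hz. rewrite eucl_sym in Hz.
    pose proof (eucl_triangle (ball_pt w) (ball_pt z) (emb (inr c))).
    assert (Hwz : eta / 2 <= eucl (ball_pt w) (ball_pt z)) by (unfold ball_pt in *; lra).
    rewrite eucl_sqdist in Hwz. rewrite <- (sqrt_sqrt (sqdist (ball_pt w) (ball_pt z)))
      by apply sqdist_ge0.
    apply Rmult_le_compat; lra. }
  pose proof (dbar_image_le (eta / 2) x y ltac:(lra) (Far x a Ha Hx1) (Far y b Hb Hy1))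
    as HU.
  replace (2 * ball_gap w / (eta / 2 * (eta / 2))) with (8 * ball_gap w / (eta * eta)) in HU
    by (field; lra).
  pose proof (dbar_triangle (inr (snd g a)) (inl (fst g x)) (inr (snd g b))).
  pose proof (dbar_triangle (inl (fst g x)) (inl (fst g y)) (inr (snd g b))).
  rewrite (dbar_sym (inl (fst g y))) in *. unfold dS. lra.
Qed.

Lemma ball_gap_ge_of_separated3 d s a b c : 0 < d ->
  separated3 d a b c -> separated3 s (snd g a) (snd g b) (snd g c) ->
  s * (d * d) / 32 <= ball_gap w.
Proof.
  intros Hd [Hab [Hac Hbc]] [Sab [Sac Sbc]]. unfold dS, dbar in *.
  assert (Hgap : forall x y, s <= dS (snd g x) (snd g y) ->
            d / 2 <= eucl (ball_pt w) (emb (inr x)) -> d / 2 <= eucl (ball_pt w) (emb (inr y)) ->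
            s * (d * d) / 32 <= ball_gap w).
  { intros x y Hs Hx Hy. pose proof (dS_image_le (d / 2) x y ltac:(lra) Hx Hy).
    assert (s <= 8 * ball_gap w / (d / 2 * (d / 2))) by lra.
    apply (Rmult_le_reg_r (32 / (d * d))); [apply Rdiv_lt_0_compat; nra|].
    replace (s * (d * d) / 32 * (32 / (d * d))) with s by (field; lra).
    replace (8 * ball_gap w / (d / 2 * (d / 2))) with (ball_gap w * (32 / (d * d))) in *
      by (field; lra).
    lra. }
  (* by the triangle inequality, at most one of the three points is [d/2]-close to [w] *)
  set (W := ball_pt w).
  pose proof (eucl_triangle (emb (inr a)) W (emb (inr b))).
  pose proof (eucl_triangle (emb (inr a)) W (emb (inr c))).
  pose proof (eucl_triangle (emb (inr b)) W (emb (inr c))).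
  rewrite !(eucl_sym _ W) in *.
  destruct (Rle_or_lt (d / 2) (eucl W (emb (inr a))));
  destruct (Rle_or_lt (d / 2) (eucl W (emb (inr b))));
  destruct (Rle_or_lt (d / 2) (eucl W (emb (inr c)))); try lra.
  - apply (Hgap a b); assumption.
  - apply (Hgap a b); assumption.
  - apply (Hgap a c); assumption.
  - apply (Hgap b c); assumption.
Qed.

End MovingToOrigin.

Lemma boundary_conj (H : H3 -> H3) h g g' : isIsom g -> isIsom g' ->
  continuous_bar (union_map H h) -> (forall p, H (fst g p) = fst g' (H p)) ->
  forall a, h (snd g a) = snd g' (h a).
Proof.
  intros [_ [_ Cg]] [_ [_ Cg']] Hc Hconj a.
  apply dS_eq0, Rle_antisym; [|apply dS_ge0].
  apply Rle_plus_epsilon. intros e He. rewrite Rplus_0_l.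
  destruct (Hc (inr (snd g a)) (e / 2)) as [d1 [Hd1 P1]]; [lra|].
  destruct (Cg (inr a) d1 Hd1) as [d2 [Hd2 P2]].
  destruct (Cg' (inr (h a)) (e / 2)) as [d4 [Hd4 P4]]; [lra|].
  destruct (Hc (inr a) d4 Hd4) as [d3 [Hd3 P3]].
  destruct (exists_H3_near a (Rmin d2 d3)) as [x Hx]; [apply Rmin_pos; lra|].
  pose proof (Rmin_l d2 d3); pose proof (Rmin_r d2 d3).
  specialize (P1 _ (P2 (inl x) ltac:(lra))). specialize (P4 _ (P3 (inl x) ltac:(lra))).
  cbn [union_map] in P1, P4. rewrite Hconj in P1.
  pose proof (dbar_triangle (inr (h (snd g a))) (inl (fst g' (H x))) (inr (snd g' (h a)))).
  rewrite (dbar_sym (inl _)) in *. unfold dS. lra.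
Qed.

(** * Compactness *)

Definition strict_incr (phi : nat -> nat) : Prop := forall n, (phi n < phi (Datatypes.S n))%nat.

Lemma strict_incr_lt phi : strict_incr phi -> forall m n, (m < n)%nat -> (phi m < phi n)%nat.
Proof. intros H m n Hmn. induction Hmn; [apply H|]. specialize (H m0). lia. Qed.

Lemma strict_incr_ge phi : strict_incr phi -> forall n, (n <= phi n)%nat.
Proof. intros H n. induction n; [lia|]. specialize (H n). lia. Qed.

Lemma strict_incr_comp phi psi :
  strict_incr phi -> strict_incr psi -> strict_incr (fun n => phi (psi n)).
Proof. intros H1 H2 n. apply strict_incr_lt; auto. Qed.

Lemma Un_cv_subseq u l phi : Un_cv u l -> strict_incr phi -> Un_cv (fun n => u (phi n)) l.
Proof.
  intros H Hphi eps He. destruct (H eps He) as [N HN]. exists N. intros n Hn.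
  apply HN. pose proof (strict_incr_ge phi Hphi n). lia.
Qed.

Lemma converges_S_subseq u a phi :
  converges_S u a -> strict_incr phi -> converges_S (fun n => u (phi n)) a.
Proof.
  intros H Hphi eps He. destruct (H eps He) as [N HN]. exists N. intros n Hn.
  apply HN. pose proof (strict_incr_ge phi Hphi n). lia.
Qed.

Lemma Un_cv_inv_INR_S : Un_cv (fun n => / INR (Datatypes.S n)) 0.
Proof.
  apply cv_infty_cv_0. intro M. destruct (INR_unbounded M) as [N HN]. exists N.
  intros n Hn. apply (Rlt_le_trans _ _ _ HN), le_INR. lia.
Qed.

Lemma bounded_seq_cv_subseq (u : nat -> R) : (forall n, -1 <= u n <= 1) ->
  exists phi l, strict_incr phi /\ Un_cv (fun n => u (phi n)) l.
Proof.
  intro Hu.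
  destruct (Bolzano_Weierstrass u (fun c => -1 <= c <= 1) (compact_P3 (-1) 1) Hu) as [l Hl].
  assert (Hp : forall N k, { p | (N <= p)%nat /\ Rabs (u p - l) < / INR (Datatypes.S k) }).
  { intros N k. apply constructive_indefinite_description.
    assert (Hk : 0 < / INR (Datatypes.S k)) by (apply Rinv_0_lt_compat, lt_0_INR; lia).
    destruct (Hl (fun y => Rabs (y - l) < / INR (Datatypes.S k)) N) as [p Hp].
    - exists (mkposreal _ Hk). intros y Hy. exact Hy.
    - exists p. exact Hp. }
  set (phi := fix f (n : nat) : nat :=
        match n with
        | O => proj1_sig (Hp O O)
        | Datatypes.S m => proj1_sig (Hp (Datatypes.S (f m)) (Datatypes.S m))
        end).
  assert (Hphi : forall n, Rabs (u (phi n) - l) < / INR (Datatypes.S n)).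
  { intros [|n]; simpl.
    - destruct (Hp O O) as [p [Hle Hpl]]. exact Hpl.
    - destruct (Hp (Datatypes.S (phi n)) (Datatypes.S n)) as [p [Hle Hpl]]. exact Hpl. }
  exists phi, l. split.
  - intro n. simpl. destruct (Hp (Datatypes.S (phi n)) (Datatypes.S n)) as [p [Hle Hpl]]. simpl. lia.
  - intros eps He. destruct (Un_cv_inv_INR_S eps He) as [N HN]. exists N. intros n Hn.
    specialize (HN n Hn). unfold Rdist in *. rewrite Rminus_0_r, Rabs_right in HN
      by (apply Rle_ge, Rlt_le, Rinv_0_lt_compat, lt_0_INR; lia).
    specialize (Hphi n). lra.
Qed.

Lemma converges_S_of_coords (s : nat -> S) l1 l2 l3 :
  Un_cv (fun n => vx (emb (inr (s n)))) l1 -> Un_cv (fun n => vy (emb (inr (s n)))) l2 ->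
  Un_cv (fun n => vz (emb (inr (s n)))) l3 -> exists a, converges_S s a.
Proof.
  intros C1 C2 C3.
  assert (HL : sqnorm (l1, l2, l3) = 1).
  { set (sq := fun n => vx (emb (inr (s n))) * vx (emb (inr (s n)))
                        + vy (emb (inr (s n))) * vy (emb (inr (s n)))
                        + vz (emb (inr (s n))) * vz (emb (inr (s n)))).
    assert (Csq : Un_cv sq (l1 * l1 + l2 * l2 + l3 * l3))
      by (apply CV_plus; [apply CV_plus|]; apply CV_mult; assumption).
    assert (Csq1 : Un_cv sq 1).
    { intros eps He. exists O. intros n _. unfold Rdist, sq.
      pose proof (sqnorm_emb_S (s n)) as E. unfold sqnorm in E.
      rewrite <- E. rewrite Rabs_minus_sym, Rabs_right by (apply Req_ge; ring). lra. }
    unfold sqnorm, vx, vy, vz; cbn [fst snd].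
    rewrite (UL_sequence _ _ _ Csq1 Csq). ring. }
  destruct (sphere_emb_S _ HL) as [a Ha]. exists a. intros eps He.
  destruct (C1 (eps / 2)) as [N1 HN1]; [lra|].
  destruct (C2 (eps / 2)) as [N2 HN2]; [lra|].
  destruct (C3 (eps / 2)) as [N3 HN3]; [lra|].
  exists (N1 + N2 + N3)%nat. intros n Hn. unfold dS, dbar. rewrite Ha.
  replace eps with (2 * (eps / 2)) by field.
  apply eucl_lt_of_coords; [apply HN1 | apply HN2 | apply HN3]; lia.
Qed.

Lemma S_seq_compact (s : nat -> S) :
  exists phi a, strict_incr phi /\ converges_S (fun n => s (phi n)) a.
Proof.
  assert (Hb : forall a, -1 <= vx (emb (inr a)) <= 1 /\ -1 <= vy (emb (inr a)) <= 1 /\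
                         -1 <= vz (emb (inr a)) <= 1).
  { intro a. pose proof (sqnorm_emb_S a) as E. unfold sqnorm in E.
    pose proof (pow2_ge_0 (vx (emb (inr a)))); pose proof (pow2_ge_0 (vy (emb (inr a)))).
    pose proof (pow2_ge_0 (vz (emb (inr a)))). repeat split; nra. }
  destruct (bounded_seq_cv_subseq (fun n => vx (emb (inr (s n))))) as [p1 [l1 [I1 C1]]];
    [intro n; apply Hb|].
  destruct (bounded_seq_cv_subseq (fun n => vy (emb (inr (s (p1 n)))))) as [p2 [l2 [I2 C2]]];
    [intro n; apply Hb|].
  destruct (bounded_seq_cv_subseq (fun n => vz (emb (inr (s (p1 (p2 n))))))) as [p3 [l3 [I3 C3]]];
    [intro n; apply Hb|].
  assert (I23 : strict_incr (fun n => p2 (p3 n))) by (apply strict_incr_comp; assumption).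
  destruct (converges_S_of_coords (fun n => s (p1 (p2 (p3 n)))) l1 l2 l3) as [a Ha].
  - exact (Un_cv_subseq _ _ _ C1 I23).
  - exact (Un_cv_subseq _ _ _ C2 I3).
  - exact C3.
  - exists (fun n => p1 (p2 (p3 n))), a. split; [apply strict_incr_comp|]; assumption.
Qed.

Lemma Un_cv_const c : Un_cv (fun _ => c) c.
Proof. intros e He. exists O. intros n _. unfold Rdist. rewrite Rminus_diag, Rabs_R0. exact He. Qed.

Lemma dS_converges u v a b :
  converges_S u a -> converges_S v b -> Un_cv (fun n => dS (u n) (v n)) (dS a b).
Proof.
  intros Cu Cv eps He.
  destruct (Cu (eps / 2)) as [N1 HN1]; [lra|]. destruct (Cv (eps / 2)) as [N2 HN2]; [lra|].
  exists (N1 + N2)%nat. intros n Hn.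
  specialize (HN1 n ltac:(lia)). specialize (HN2 n ltac:(lia)).
  pose proof (dS_triangle (u n) a (v n)); pose proof (dS_triangle a b (v n)).
  pose proof (dS_triangle a (u n) b); pose proof (dS_triangle (u n) (v n) b).
  rewrite (dS_sym (v n) b) in *. rewrite (dS_sym a (u n)) in *.
  unfold Rdist. apply Rabs_def1; lra.
Qed.

Lemma continuous_S_converges h u a :
  continuous_S h -> converges_S u a -> converges_S (fun n => h (u n)) (h a).
Proof.
  intros Hc Cu eps He. destruct (Hc a eps He) as [d [Hd Hh]]. destruct (Cu d Hd) as [N HN].
  exists N. intros n Hn. rewrite dS_sym. apply Hh. rewrite dS_sym. apply HN, Hn.
Qed.

Lemma continuous_injective_separates (h : S -> S) :
  continuous_S h -> (forall x y, h x = h y -> x = y) ->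
  forall d, 0 < d -> exists d', 0 < d' /\ forall x y, d <= dS x y -> d' <= dS (h x) (h y).
Proof.
  intros Hc Hinj d Hd. apply NNPP. intro Hnot.
  assert (Hpair : forall n : nat, exists xy : S * S,
            d <= dS (fst xy) (snd xy) /\ dS (h (fst xy)) (h (snd xy)) < / INR (Datatypes.S n)).
  { intro n. apply NNPP. intro Hn. apply Hnot. exists (/ INR (Datatypes.S n)). split.
    - apply Rinv_0_lt_compat, lt_0_INR. lia.
    - intros x y Hxy. apply Rnot_lt_le. intro Hlt. apply Hn. exists (x, y). auto. }
  destruct (choice _ Hpair) as [xy Hxy].
  destruct (S_seq_compact (fun n => fst (xy n))) as [p1 [x [I1 Cx]]].
  destruct (S_seq_compact (fun n => snd (xy (p1 n)))) as [p2 [y [I2 Cy]]].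
  pose proof (converges_S_subseq _ _ p2 Cx I2) as Cx'.
  assert (Hsep : d <= dS x y).
  { apply (Rle_cv_lim (Un := fun _ => d)
                      (Vn := fun n => dS (fst (xy (p1 (p2 n)))) (snd (xy (p1 (p2 n)))))).
    - intro n. apply Hxy.
    - apply Un_cv_const.
    - apply dS_converges; assumption. }
  assert (Himg : dS (h x) (h y) <= 0).
  { apply (Rle_cv_lim (Un := fun n => dS (h (fst (xy (p1 (p2 n))))) (h (snd (xy (p1 (p2 n))))))
                      (Vn := fun n => / INR (Datatypes.S n))).
    - intro n. destruct (Hxy (p1 (p2 n))) as [_ Hlt].
      pose proof (strict_incr_ge _ (strict_incr_comp p1 p2 I1 I2) n).
      apply Rlt_le, (Rlt_le_trans _ _ _ Hlt), Rinv_le_contravar;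
        [apply lt_0_INR | apply le_INR]; lia.
    - apply dS_converges; apply continuous_S_converges; assumption.
    - apply Un_cv_inv_INR_S. }
  pose proof (dS_ge0 (h x) (h y)).
  assert (x = y) by (apply Hinj, dS_eq0; lra). subst y.
  rewrite dS_refl in Hsep. lra.
Qed.

Lemma compact_H_bounded K : compact_H K -> exists M, forall q, K q -> cosh_dH origin q <= M.
Proof.
  intro HK. apply NNPP. intro Hnot.
  assert (Hq : forall n : nat, exists q, K q /\ INR n < cosh_dH origin q).
  { intro n. apply NNPP. intro Hn. apply Hnot. exists (INR n). intros q Kq.
    apply Rnot_lt_le. intro Hlt. apply Hn. exists q. auto. }
  destruct (choice _ Hq) as [u Hu].
  destruct (HK u (fun n => proj1 (Hu n))) as [phi [p [Iphi [_ Cv]]]].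
  destruct (Cv 1 Rlt_0_1) as [N HN].
  destruct (INR_unbounded (2 * (cosh_dH origin p + 1) * (exp 1 + 1))) as [n0 Hn0].
  set (n := (N + n0)%nat).
  specialize (HN n ltac:(unfold n; lia)).
  apply Rlt_le, cosh_dH_le_of_dH_le in HN. rewrite cosh_dH_sym in HN.
  pose proof (cosh_dH_origin_add1_le p (u (phi n))).
  pose proof (cosh_dH_ge1 origin p).
  assert (INR n0 <= INR (phi n))
    by (apply le_INR; pose proof (strict_incr_ge phi Iphi n); unfold n in *; lia).
  destruct (Hu (phi n)) as [_ Hb].
  assert (2 * (cosh_dH origin p + 1) * (cosh_dH p (u (phi n)) + 1)
          <= 2 * (cosh_dH origin p + 1) * (exp 1 + 1)) by (apply Rmult_le_compat_l; lra).
  lra.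
Qed.

(** * Lattices and tameness *)

Lemma separated3_map (f : S -> S) d d' a b c :
  (forall x y, d <= dS x y -> d' <= dS (f x) (f y)) ->
  separated3 d a b c -> separated3 d' (f a) (f b) (f c).
Proof. intros Hf [Hab [Hac Hbc]]. repeat split; apply Hf; assumption. Qed.

Lemma separated3_of_distinct a b c : a <> b -> a <> c -> b <> c ->
  exists d, 0 < d /\ separated3 d a b c.
Proof.
  intros Hab Hac Hbc.
  pose proof (dS_pos a b Hab); pose proof (dS_pos a c Hac); pose proof (dS_pos b c Hbc).
  exists (Rmin (dS a b) (Rmin (dS a c) (dS b c))). split; [repeat apply Rmin_pos; assumption|].
  pose proof (Rmin_l (dS a b) (Rmin (dS a c) (dS b c))).
  pose proof (Rmin_r (dS a b) (Rmin (dS a c) (dS b c))).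
  pose proof (Rmin_l (dS a c) (dS b c)); pose proof (Rmin_r (dS a c) (dS b c)).
  repeat split; lra.
Qed.

Lemma separated3_eventually u v w alpha beta gamma s :
  converges_S u alpha -> converges_S v beta -> converges_S w gamma ->
  0 < s -> separated3 s alpha beta gamma ->
  exists N, forall n, (N <= n)%nat -> separated3 (s / 2) (u n) (v n) (w n).
Proof.
  intros Cu Cv Cw Hs [Hab [Hac Hbc]].
  destruct (dS_converges _ _ _ _ Cu Cv (s / 2)) as [N1 H1]; [lra|].
  destruct (dS_converges _ _ _ _ Cu Cw (s / 2)) as [N2 H2]; [lra|].
  destruct (dS_converges _ _ _ _ Cv Cw (s / 2)) as [N3 H3]; [lra|].
  exists (N1 + N2 + N3)%nat. intros n Hn.
  specialize (H1 n ltac:(lia)); specialize (H2 n ltac:(lia)); specialize (H3 n ltac:(lia)).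
  unfold Rdist in *. apply Rabs_def2 in H1, H2, H3.
  repeat split; lra.
Qed.

Lemma isIsom_comp g1 g2 : isIsom g1 -> isIsom g2 -> isIsom (iso_comp g1 g2).
Proof.
  intros [[I1 S1] [D1 C1]] [[I2 S2] [D2 C2]]. unfold iso_comp, isIsom; cbn [fst snd].
  split; [split|split].
  - intros x y E. apply I2, I1, E.
  - intro y. destruct (S1 y) as [x1 <-]. destruct (S2 x1) as [x2 <-]. exists x2. reflexivity.
  - intros p q. rewrite D1, D2. reflexivity.
  - intros z eps He.
    destruct (C1 (union_map (fst g2) (snd g2) z) eps He) as [d1 [Hd1 P1]].
    destruct (C2 z d1 Hd1) as [d2 [Hd2 P2]].
    exists d2. split; [assumption|]. intros w Hw. specialize (P1 _ (P2 w Hw)).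
    destruct z, w; exact P1.
Qed.

(* Precompose [g] with the lattice element [gamma^-1] bringing [g p] into a compact
   fundamental set; by equivariance this is absorbed by postcomposition with the
   corresponding element [gamma'] of the second lattice. *)
Lemma equivariant_pair_reduce H h : equivariant_pair H h ->
  exists K, compact_H K /\
    forall g p, isIsom g -> exists k g', isIsom k /\ isIsom g' /\ K (fst k p) /\
      (forall z, H (fst g z) = fst g' (H (fst k z))) /\
      (forall a, h (snd g a) = snd g' (h (snd k a))).
Proof.
  intros [_ [_ [HcH [G1 [G2 [[[G1iso [_ [_ G1inv]]] [_ [_ [K [HK Kcov]]]]]
                              [[[G2iso _] _] [Conj _]]]]]]]].
  exists K. split; [exact HK|]. intros g p Hg.
  destruct (Kcov (fst g p)) as [gam [q [Ggam [Kq Eq]]]].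
  destruct (G1inv gam Ggam) as [gami [Ggami [E1 E2]]].
  destruct (Conj gam Ggam) as [gam' [Ggam' HHgam]].
  pose proof (boundary_conj H h gam gam' (G1iso gam Ggam) (G2iso gam' Ggam') HcH HHgam) as Hhgam.
  assert (Hl : forall z, fst gami (fst gam z) = z) by (intro z; exact (f_equal (fun e => fst e z) E2)).
  assert (Hr : forall z, fst gam (fst gami z) = z) by (intro z; exact (f_equal (fun e => fst e z) E1)).
  assert (Hrb : forall a, snd gam (snd gami a) = a) by (intro a; exact (f_equal (fun e => snd e a) E1)).
  exists (iso_comp gami g), gam'. cbn [fst snd iso_comp].
  split; [apply isIsom_comp; auto|]. split; [auto|]. split; [|split].
  - rewrite <- Eq, Hl. exact Kq.
  - intro z. rewrite <- HHgam, Hr. reflexivity.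
  - intro a. rewrite <- Hhgam, Hrb. reflexivity.
Qed.

Lemma bi_lipschitz_bounded H M : bi_lipschitz H ->
  exists M', forall q, cosh_dH origin q <= M -> cosh_dH origin (H q) <= M'.
Proof.
  intros [_ [L [HL HLip]]].
  set (r := L * arcosh (Rmax M 1)).
  exists (2 * (cosh_dH origin (H origin) + 1) * (exp r + 1)). intros q Hq.
  assert (Hr : dH (H origin) (H q) <= r).
  { destruct (HLip origin q) as [_ Hle]. apply (Rle_trans _ _ _ Hle), Rmult_le_compat_l; [lra|].
    apply dH_le_of_cosh_dH_le, (Rle_trans _ _ _ Hq), Rmax_l. }
  apply cosh_dH_le_of_dH_le in Hr.
  pose proof (cosh_dH_origin_add1_le (H origin) (H q)).
  pose proof (cosh_dH_ge1 origin (H origin)).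
  assert (2 * (cosh_dH origin (H origin) + 1) * (cosh_dH (H origin) (H q) + 1)
          <= 2 * (cosh_dH origin (H origin) + 1) * (exp r + 1)) by (apply Rmult_le_compat_l; lra).
  lra.
Qed.

Lemma isIsom_dS_ge_of_bounded p M : exists c, 0 < c /\
  forall k a b, isIsom k -> cosh_dH origin (fst k p) <= M -> c * dS a b <= dS (snd k a) (snd k b).
Proof.
  set (B := 2 * (cosh_dH origin p + 1) * (Rmax M 1 + 1)).
  pose proof (cosh_dH_ge1 origin p). pose proof (Rmax_r M 1).
  assert (HB : 0 < B) by (unfold B; repeat apply Rmult_lt_0_compat; lra).
  exists (2 / B / 4). split; [apply Rdiv_lt_0_compat; [apply Rdiv_lt_0_compat|]; lra|].
  intros k a b Hk HM. pose proof Hk as [[_ Sk] _]. destruct (Sk origin) as [w Hw].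
  apply (dS_image_ge k w Hk Hw); [apply Rdiv_lt_0_compat; lra|].
  rewrite <- Hw, isIsom_cosh_dH, cosh_dH_sym in HM by exact Hk.
  pose proof (cosh_dH_origin_add1_le p w). pose proof (cosh_dH_origin w).
  pose proof (ball_gap_pos w). pose proof (Rmax_l M 1).
  assert (Hw2 : 2 / ball_gap w <= B)
    by (unfold B; apply (Rle_trans _ (2 * (cosh_dH origin p + 1) * (cosh_dH p w + 1)));
        [lra | apply Rmult_le_compat_l; lra]).
  apply (Rmult_le_reg_r (B / ball_gap w)); [apply Rdiv_lt_0_compat; lra|].
  replace (2 / B * (B / ball_gap w)) with (2 / ball_gap w) by (field; lra).
  replace (ball_gap w * (B / ball_gap w)) with B by (field; lra).
  exact Hw2.
Qed.

Lemma isIsom_cosh_dH_le_of_separated3 d s : 0 < d -> 0 < s -> exists C, 0 < C /\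
  forall F a b c x, isIsom F -> separated3 d a b c ->
    separated3 s (snd F a) (snd F b) (snd F c) ->
    cosh_dH origin (fst F x) <= C * (cosh_dH origin x + 1).
Proof.
  intros Hd Hs. set (k := s * (d * d) / 32).
  assert (Hk : 0 < k) by (unfold k; apply Rdiv_lt_0_compat; [apply Rmult_lt_0_compat; nra | lra]).
  exists (4 / k). split; [apply Rdiv_lt_0_compat; lra|].
  intros F a b c x HF Sabc SF. pose proof HF as [[_ SurjF] _].
  destruct (SurjF origin) as [w Hw].
  pose proof (ball_gap_ge_of_separated3 F w HF Hw d s a b c Hd Sabc SF) as Hgap.
  fold k in Hgap.
  replace (cosh_dH origin (fst F x)) with (cosh_dH w x)
    by (rewrite <- Hw; symmetry; apply isIsom_cosh_dH, HF).
  pose proof (cosh_dH_add1_le w x) as Hwx. rewrite (cosh_dH_origin w) in Hwx.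
  pose proof (ball_gap_pos w). pose proof (cosh_dH_ge1 origin x).
  assert (2 / ball_gap w <= 2 / k)
    by (apply Rmult_le_compat_l; [lra|]; apply Rinv_le_contravar; lra).
  assert (2 * (2 / ball_gap w) * (cosh_dH origin x + 1) <= 2 * (2 / k) * (cosh_dH origin x + 1))
    by (apply Rmult_le_compat_r; lra).
  replace (4 / k) with (2 * (2 / k)) by (field; lra). lra.
Qed.

Lemma tame_of_eventually_bounded (Hn : nat -> H3 -> H3) :
  (forall p, exists q r N, forall n, (N <= n)%nat -> dH q (Hn n p) <= r) -> tame Hn.
Proof.
  intros Hev p. destruct (Hev p) as [q [r [N HN]]]. exists q.
  assert (Hfin : forall M, exists r', forall n, (n < M)%nat -> dH q (Hn n p) <= r').
  { induction M as [|M [r' Hr']]; [exists 0; intros; lia|].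
    exists (Rmax r' (dH q (Hn M p))). intros n Hn'.
    destruct (Nat.eq_dec n M) as [->|]; [apply Rmax_r|].
    apply (Rle_trans _ r'); [apply Hr'; lia | apply Rmax_l]. }
  destruct (Hfin N) as [r' Hr']. exists (Rmax r r'). intro n.
  destruct (Nat.lt_ge_cases n N).
  - apply (Rle_trans _ r'); [apply Hr'; assumption | apply Rmax_r].
  - apply (Rle_trans _ r); [apply HN; assumption | apply Rmax_l].
Qed.

Lemma equivariant_pair_orbit_bounded H h p d s : equivariant_pair H h -> 0 < d -> 0 < s ->
  exists r, forall f g a b c, isIsom f -> isIsom g -> separated3 d a b c ->
    separated3 s (snd f (h (snd g a))) (snd f (h (snd g b))) (snd f (h (snd g c))) ->
    dH origin (fst f (H (fst g p))) <= r.
Proof.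
  intros HE Hd Hs. pose proof HE as [Hlip [[Hhc [hinv [Hhinv _]]] _]].
  destruct (equivariant_pair_reduce H h HE) as [K [HK Hred]].
  destruct (compact_H_bounded K HK) as [MK HMK].
  destruct (isIsom_dS_ge_of_bounded p MK) as [c1 [Hc1 Hk]].
  assert (Hinj : forall x y, h x = h y -> x = y)
    by (intros x y E; rewrite <- (Hhinv x), <- (Hhinv y), E; reflexivity).
  destruct (continuous_injective_separates h Hhc Hinj (c1 * d)) as [d2 [Hd2 Hsep]];
    [apply Rmult_lt_0_compat; assumption|].
  destruct (isIsom_cosh_dH_le_of_separated3 d2 s Hd2 Hs) as [C [HC HF]].
  destruct (bi_lipschitz_bounded H MK Hlip) as [M' HM'].
  exists (arcosh (C * (M' + 1))). intros f g a b c Hf Hg Sabc Simg.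
  destruct (Hred g p Hg) as [k [g' [Hk' [Hg' [Kkp [HH Hh]]]]]].
  rewrite HH in *. rewrite !Hh in Simg.
  change (fst f (fst g' (H (fst k p)))) with (fst (iso_comp f g') (H (fst k p))).
  apply dH_le_of_cosh_dH_le.
  apply (Rle_trans _ (C * (cosh_dH origin (H (fst k p)) + 1))).
  - apply (HF (iso_comp f g') (h (snd k a)) (h (snd k b)) (h (snd k c)));
      [apply isIsom_comp; assumption | | exact Simg].
    apply (separated3_map h (c1 * d)); [exact Hsep|].
    apply (separated3_map (snd k) d); [|exact Sabc].
    intros x y Hxy. apply (Rle_trans _ (c1 * dS x y)); [apply Rmult_le_compat_l; lra|].
    apply Hk; [assumption | apply HMK, Kkp].
  - apply Rmult_le_compat_l; [lra|]. apply Rplus_le_compat_r, HM', HMK, Kkp.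
Qed.

Theorem lemma1p3 (H : H3 -> H3) (h : S -> S)
    (Hn : nat -> H3 -> H3) (hn : nat -> S -> S)
    (a b c alpha beta gamma : S) :
  equivariant_pair H h ->
  derived_from Hn hn H h ->
  a <> b -> a <> c -> b <> c ->
  converges_S (fun n => hn n a) alpha ->
  converges_S (fun n => hn n b) beta ->
  converges_S (fun n => hn n c) gamma ->
  alpha <> beta -> alpha <> gamma -> beta <> gamma ->
  tame Hn.
Proof.
  intros HE HD Hab Hac Hbc Ca Cb Cc Hal Hag Hbg.
  destruct (separated3_of_distinct a b c Hab Hac Hbc) as [d [Hd Sabc]].
  destruct (separated3_of_distinct alpha beta gamma Hal Hag Hbg) as [s [Hs Slim]].
  destruct (separated3_eventually _ _ _ _ _ _ s Ca Cb Cc Hs Slim) as [N HN].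
  apply tame_of_eventually_bounded. intro p.
  destruct (equivariant_pair_orbit_bounded H h p d (s / 2) HE Hd ltac:(lra)) as [r Hr].
  exists origin, r, N. intros n Hn'.
  destruct (HD n) as [f [g [Hf [Hg [HHn Hhn]]]]].
  rewrite HHn. apply (Hr f g a b c); [assumption .. |].
  rewrite <- !Hhn. apply HN, Hn'.
Qed.
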